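(* Let $0\le V_0\le V_1\le\infty$. Then the set of points $p\in\bigcup_{V\in[V_0,V_1]}S_V$ whose forward semiorbit $\{f^k(p)\}_{k\ge0}$ is bounded is a closed subset of $\mathbb{R}^3$.
   Context: $f:\mathbb{R}^3\to\mathbb{R}^3$, $f(x,y,z)=(2xy-z,x,y)$. The Fricke–Vogt character is $I(x,y,z)=x^2+y^2+z^2-2xyz-1$, which satisfies $I\circ f=I$, and $S_V=\{p\in\mathbb{R}^3: I(p)=V\}$ for $V\ge0$ (for $V_1=\infty$ the union is over $[V_0,\infty)$). *)

From Stdlib Require Import Reals.
Open Scope R_scope.

Definition pt := (R * R * R)%type.

Definition f (p : pt) : pt :=
  let '(x, y, z) := p in (2 * x * y - z, x, y).

Definition FV (p : pt) : R :=
  let '(x, y, z) := p in x ^ 2 + y ^ 2 + z ^ 2 - 2 * x * y * z - 1.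

Definition dist3 (p q : pt) : R :=
  let '(x1, y1, z1) := p in let '(x2, y2, z2) := q in
  sqrt ((x1 - x2) ^ 2 + (y1 - y2) ^ 2 + (z1 - z2) ^ 2).

Definition open3 (U : pt -> Prop) : Prop :=
  forall p, U p -> exists eps, 0 < eps /\ forall q, dist3 p q < eps -> U q.

Definition closed3 (A : pt -> Prop) : Prop := open3 (fun p => ~ A p).

(* Extended upper bound: None = +infinity *)
Definition le_ext (V : R) (V1 : option R) : Prop :=
  match V1 with None => True | Some v => V <= v end.

Definition in_union_S (V0 : R) (V1 : option R) (p : pt) : Prop :=
  exists V, V0 <= V /\ le_ext V V1 /\ FV p = V.

Definition bounded_fwd_orbit (p : pt) : Prop :=
  exists M, forall k : nat, dist3 (Nat.iter k f p) (0, 0, 0) <= M.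

From Pilot Require Import Defs.
From Stdlib Require Import Reals Lra Classical.
(* Re-import Defs so that [f] denotes the map of the theorem and not
   [Rtopology.f] from the Reals library. *)
Import Defs.
Open Scope R_scope.

(* - f preserves I, and I is continuous, so points with I < V0 or I > V1
     have a neighbourhood outside the slab.
   - Escape region E = {|x| > |y| > 1, |z| < |x|}: E is forward invariant and
     along an orbit in E the first coordinate grows at least linearly, so
     orbits entering E are unbounded.
   - Conversely, if I(p) >= 0 and the orbit of p never enters E, an algebraic
     argument on the identities (x - yz)^2 = I + (1-y^2)(1-z^2) and
     (z - xy)^2 = I + (1-x^2)(1-y^2) bounds |x| by max(|y|, |z|, 1 + 3 sqrt(I+1)),
     and by induction the orbit is bounded.
   - Hence an unbounded orbit with I >= 0 enters the open condition E at some
     time k; as f^k is continuous, E holds at time k on a neighbourhood of p,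
     whose points therefore have unbounded orbits as well. *)

Definition PX (p : pt) : R := fst (fst p).

Definition PY (p : pt) : R := snd (fst p).

Definition PZ (p : pt) : R := snd p.

Lemma PX_f (t : pt) : PX (f t) = 2 * PX t * PY t - PZ t.
Proof. destruct t as [[x y] z]; reflexivity. Qed.

Lemma PY_f (t : pt) : PY (f t) = PX t.
Proof. destruct t as [[x y] z]; reflexivity. Qed.

Lemma PZ_f (t : pt) : PZ (f t) = PY t.
Proof. destruct t as [[x y] z]; reflexivity. Qed.

Lemma FV_f (t : pt) : FV (f t) = FV t.
Proof. destruct t as [[x y] z]; simpl; ring. Qed.

Lemma FV_iter (k : nat) (p : pt) : FV (Nat.iter k f p) = FV p.
Proof. induction k as [|k IH]; simpl; [reflexivity|]. rewrite FV_f; exact IH. Qed.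

Definition origin : pt := (0, 0, 0).

Lemma sq_abs (x : R) : x * x = Rabs x * Rabs x.
Proof. rewrite <- Rabs_mult. symmetry. apply Rabs_pos_eq. nra. Qed.

Lemma abs_le_sqrt (u S : R) : 0 <= S -> Rabs u <= sqrt (u ^ 2 + S).
Proof.
  intro HS. rewrite <- sqrt_Rsqr_abs. apply sqrt_le_1_alt. unfold Rsqr. nra.
Qed.

Lemma coord_le_dist (p q : pt) :
  Rabs (PX p - PX q) <= dist3 p q /\ Rabs (PY p - PY q) <= dist3 p q /\
  Rabs (PZ p - PZ q) <= dist3 p q.
Proof.
  destruct p as [[x1 y1] z1], q as [[x2 y2] z2]; cbn [dist3 PX PY PZ fst snd].
  set (dx := x1 - x2); set (dy := y1 - y2); set (dz := z1 - z2).
  assert (Hx := pow2_ge_0 dx); assert (Hy := pow2_ge_0 dy); assert (Hz := pow2_ge_0 dz).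
  split; [|split].
  - replace (dx ^ 2 + dy ^ 2 + dz ^ 2) with (dx ^ 2 + (dy ^ 2 + dz ^ 2)) by ring.
    apply abs_le_sqrt. lra.
  - replace (dx ^ 2 + dy ^ 2 + dz ^ 2) with (dy ^ 2 + (dx ^ 2 + dz ^ 2)) by ring.
    apply abs_le_sqrt. lra.
  - replace (dx ^ 2 + dy ^ 2 + dz ^ 2) with (dz ^ 2 + (dx ^ 2 + dy ^ 2)) by ring.
    apply abs_le_sqrt. lra.
Qed.

Lemma dist_origin_le (t : pt) :
  dist3 t origin <= Rabs (PX t) + Rabs (PY t) + Rabs (PZ t).
Proof.
  destruct t as [[x y] z]; cbn [dist3 origin PX PY PZ fst snd].
  pose proof (Rabs_pos x); pose proof (Rabs_pos y); pose proof (Rabs_pos z).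
  rewrite <- (sqrt_square (Rabs x + Rabs y + Rabs z)) by lra.
  apply sqrt_le_1_alt.
  rewrite !Rminus_0_r. simpl pow. rewrite !Rmult_1_r, (sq_abs x), (sq_abs y), (sq_abs z).
  nra.
Qed.

Definition E (t : pt) : Prop :=
  Rabs (PX t) > Rabs (PY t) /\ Rabs (PY t) > 1 /\ Rabs (PZ t) < Rabs (PX t).

(* Lower bound for the growth of |x| in one step of an orbit inside E. *)
Definition growth (t : pt) : R := Rabs (PX t) * (2 * Rabs (PY t) - 2).

Lemma escape_step (t : pt) :
  E t -> E (f t) /\ Rabs (PX t) + growth t <= Rabs (PX (f t)) /\ growth t <= growth (f t).
Proof.
  unfold E, growth. rewrite PX_f, PY_f, PZ_f. intros [Hxy [Hy Hzx]].
  pose proof (Rabs_triang_inv (2 * PX t * PY t) (PZ t)) as T.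
  rewrite !Rabs_mult, (Rabs_pos_eq 2) in T by lra.
  set (X := Rabs (PX t)) in *; set (Y := Rabs (PY t)) in *; set (Z := Rabs (PZ t)) in *.
  set (W := Rabs (2 * PX t * PY t - PZ t)) in *.
  assert (HW : X * (2 * Y - 1) <= W) by lra.
  assert (HX : X < X * (2 * Y - 1)) by nra.
  assert (HG : X * (2 * Y - 2) <= W * (2 * X - 2)) by nra.
  repeat split; lra.
Qed.

Lemma escape_linear (t : pt) (m : nat) :
  E t -> E (Nat.iter m f t) /\
  Rabs (PX t) + INR m * growth t <= Rabs (PX (Nat.iter m f t)) /\
  growth t <= growth (Nat.iter m f t).
Proof.
  intro Ht. induction m as [|m [Em [Xm Gm]]].
  - simpl. split; [exact Ht|split; lra].
  - destruct (escape_step _ Em) as [E' [X' G']].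
    rewrite S_INR. simpl Nat.iter. split; [exact E'|split; lra].
Qed.

Lemma escape_unbounded (t : pt) : E t -> ~ bounded_fwd_orbit t.
Proof.
  intros Ht [M HM].
  assert (Hg : 0 < growth t).
  { destruct Ht as [? [? ?]]. unfold growth. pose proof (Rabs_pos (PY t)). nra. }
  destruct (INR_unbounded ((M - Rabs (PX t)) / growth t)) as [m Hm].
  destruct (escape_linear t m Ht) as [_ [Hx _]].
  pose proof (proj1 (coord_le_dist (Nat.iter m f t) origin)) as Hd.
  unfold origin, PX at 2 in Hd. simpl in Hd. rewrite Rminus_0_r in Hd.
  specialize (HM m).
  apply Rmult_gt_compat_r with (r := growth t) in Hm; [|exact Hg].
  unfold Rdiv in Hm. rewrite Rmult_assoc, Rinv_l in Hm by lra.
  lra.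
Qed.

Lemma bounded_iter (n : nat) (p : pt) :
  bounded_fwd_orbit p -> bounded_fwd_orbit (Nat.iter n f p).
Proof.
  intros [M HM]. exists M. intro k. rewrite <- Nat.iter_add. apply HM.
Qed.

Lemma escape_after (n : nat) (p : pt) : E (Nat.iter n f p) -> ~ bounded_fwd_orbit p.
Proof. intros Hn Hb. exact (escape_unbounded _ Hn (bounded_iter n p Hb)). Qed.

Lemma abs_le_of_sq (x r : R) : 0 <= r -> x * x <= r * r -> Rabs x <= r.
Proof.
  intros Hr H. rewrite <- (Rabs_pos_eq r Hr). apply Rsqr_le_abs_0. exact H.
Qed.

Lemma nonescape_middle_small (a s c : R) :
  1 < Rabs a -> Rabs s <= 1 -> ~ E (f (f (a, s, c))) -> Rabs (2 * a * s - c) <= 1.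
Proof.
  unfold E, PX, PY, PZ; simpl. intros Ha Hs N.
  set (e := 2 * a * s - c) in *.
  destruct (Rle_lt_dec (Rabs e) 1) as [|He]; [assumption|]. exfalso. apply N.
  pose proof (Rabs_triang_inv (2 * e * a) s) as T.
  rewrite !Rabs_mult, (Rabs_pos_eq 2) in T by lra.
  assert (0 < (Rabs e - 1) * (Rabs a - 1)) by (apply Rmult_lt_0_compat; lra).
  repeat split; nra.
Qed.

(* Indeed |a - sc| <= sqrt(I+1) and
   |c - as| <= sqrt(I+1) by the two square identities, while c - e = 2(c - as). *)
Lemma nonescape_core_bound (a s c : R) :
  0 <= FV (a, s, c) -> 1 < Rabs a -> Rabs s <= 1 -> ~ E (f (f (a, s, c))) ->
  Rabs a <= 1 + 3 * sqrt (FV (a, s, c) + 1).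
Proof.
  intros HI Ha Hs N.
  pose proof (nonescape_middle_small a s c Ha Hs N) as He.
  assert (Hss : s * s <= 1) by (rewrite sq_abs; pose proof (Rabs_pos s); nra).
  assert (Haa : 1 <= a * a) by (rewrite sq_abs; nra).
  set (I := FV (a, s, c)) in *.
  set (r := sqrt (I + 1)).
  assert (Hr2 : r * r = I + 1) by (apply sqrt_sqrt; lra).
  assert (Hr : 0 <= r) by apply sqrt_pos.
  assert (Ha_sc : Rabs (a - s * c) <= r).
  { apply abs_le_of_sq; [exact Hr|].
    assert (Id : (a - s * c) * (a - s * c) = I + (1 - s * s) * (1 - c * c))
      by (unfold I, FV; ring).
    rewrite Id, Hr2. nra. }
  assert (Hc_as : Rabs (c - a * s) <= r).
  { apply abs_le_of_sq; [exact Hr|].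
    assert (Id : (c - a * s) * (c - a * s) = I + (1 - a * a) * (1 - s * s))
      by (unfold I, FV; ring).
    rewrite Id, Hr2. nra. }
  assert (Hc : Rabs c <= 1 + 2 * r).
  { replace c with (2 * (c - a * s) + (2 * a * s - c)) at 1 by ring.
    eapply Rle_trans; [apply Rabs_triang|].
    rewrite Rabs_mult, (Rabs_pos_eq 2) by lra. lra. }
  replace a with ((a - s * c) + s * c) at 1 by ring.
  eapply Rle_trans; [apply Rabs_triang|].
  rewrite Rabs_mult. pose proof (Rabs_pos s); pose proof (Rabs_pos c). nra.
Qed.

Lemma no_escape_bound (q : pt) :
  0 <= FV q -> ~ E q -> ~ E (f (f q)) ->
  Rabs (PX q) <= Rmax (Rmax (Rabs (PY q)) (Rabs (PZ q))) (1 + 3 * sqrt (FV q + 1)).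
Proof.
  destruct q as [[a s] c]. unfold PX, PY, PZ; simpl fst; simpl snd.
  intros HI N0 N2.
  apply Rnot_lt_le. intro Hlt.
  pose proof (Rmax_l (Rmax (Rabs s) (Rabs c)) (1 + 3 * sqrt (FV (a, s, c) + 1))).
  pose proof (Rmax_r (Rmax (Rabs s) (Rabs c)) (1 + 3 * sqrt (FV (a, s, c) + 1))).
  pose proof (Rmax_l (Rabs s) (Rabs c)); pose proof (Rmax_r (Rabs s) (Rabs c)).
  pose proof (sqrt_pos (FV (a, s, c) + 1)).
  assert (Hs : Rabs s <= 1).
  { apply Rnot_lt_le. intro Hs. apply N0. unfold E, PX, PY, PZ; simpl. lra. }
  assert (Ha : 1 < Rabs a) by lra.
  pose proof (nonescape_core_bound a s c HI Ha Hs N2). lra.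
Qed.

Lemma bounded_of_never_escaping (p : pt) :
  0 <= FV p -> (forall k, ~ E (Nat.iter k f p)) -> bounded_fwd_orbit p.
Proof.
  intros HI HE.
  set (K := 1 + 3 * sqrt (FV p + 1)).
  set (B := Rmax (Rmax (Rmax (Rabs (PX p)) (Rabs (PY p))) (Rabs (PZ p))) K).
  assert (Coords : forall k, Rabs (PX (Nat.iter k f p)) <= B /\
            Rabs (PY (Nat.iter k f p)) <= B /\ Rabs (PZ (Nat.iter k f p)) <= B).
  { induction k as [|k [IX [IY IZ]]].
    - simpl. unfold B.
      pose proof (Rmax_l (Rmax (Rmax (Rabs (PX p)) (Rabs (PY p))) (Rabs (PZ p))) K).
      pose proof (Rmax_l (Rmax (Rabs (PX p)) (Rabs (PY p))) (Rabs (PZ p))).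
      pose proof (Rmax_r (Rmax (Rabs (PX p)) (Rabs (PY p))) (Rabs (PZ p))).
      pose proof (Rmax_l (Rabs (PX p)) (Rabs (PY p))).
      pose proof (Rmax_r (Rabs (PX p)) (Rabs (PY p))).
      lra.
    - set (q := Nat.iter (S k) f p).
      assert (HY : PY q = PX (Nat.iter k f p)) by apply PY_f.
      assert (HZ : PZ q = PY (Nat.iter k f p)) by apply PZ_f.
      assert (HI_q : FV q = FV p) by apply FV_iter.
      assert (Hq := no_escape_bound q).
      rewrite HY, HZ, HI_q in Hq. rewrite HY, HZ.
      assert (HX : Rabs (PX q) <= B).
      { eapply Rle_trans; [apply Hq; [lra|apply (HE (S k))|apply (HE (S (S (S k))))]|].
        apply Rmax_lub; [apply Rmax_lub; assumption|apply Rmax_r]. }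
      repeat split; assumption. }
  exists (3 * B). intro k. destruct (Coords k) as [HX [HY HZ]].
  eapply Rle_trans; [apply dist_origin_le|]. lra.
Qed.

Lemma escapes_of_unbounded (p : pt) :
  0 <= FV p -> ~ bounded_fwd_orbit p -> exists k, E (Nat.iter k f p).
Proof.
  intros HI Hub. apply NNPP. intro Hnone. apply Hub.
  apply bounded_of_never_escaping; [exact HI|].
  intros k Hk. apply Hnone. exists k. exact Hk.
Qed.

Definition near (p : pt) (P : pt -> Prop) : Prop :=
  exists eps, 0 < eps /\ forall q, dist3 p q < eps -> P q.

Lemma near_and (p : pt) (P Q : pt -> Prop) :
  near p P -> near p Q -> near p (fun q => P q /\ Q q).
Proof.
  intros [e1 [He1 H1]] [e2 [He2 H2]]. exists (Rmin e1 e2). split.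
  - apply Rmin_pos; assumption.
  - intros q Hq. split.
    + apply H1. eapply Rlt_le_trans; [exact Hq|apply Rmin_l].
    + apply H2. eapply Rlt_le_trans; [exact Hq|apply Rmin_r].
Qed.

Lemma near_mono (p : pt) (P Q : pt -> Prop) :
  (forall q, P q -> Q q) -> near p P -> near p Q.
Proof. intros PQ [e [He H]]. exists e. split; [exact He|]. intros q Hq. apply PQ, H, Hq. Qed.

Definition cont3 (g : pt -> R) : Prop :=
  forall p eps, 0 < eps -> near p (fun q => Rabs (g q - g p) < eps).

Lemma cont3_ext (g h : pt -> R) : (forall p, g p = h p) -> cont3 g -> cont3 h.
Proof.
  intros Egh Cg p eps He. destruct (Cg p eps He) as [d [Hd H]].
  exists d. split; [exact Hd|]. intros q Hq. rewrite <- !Egh. apply H, Hq.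
Qed.

Lemma cont3_const (c : R) : cont3 (fun _ => c).
Proof.
  intros p eps He. exists 1. split; [lra|]. intros q _.
  rewrite Rminus_diag, Rabs_R0. exact He.
Qed.

Lemma cont3_coords : cont3 PX /\ cont3 PY /\ cont3 PZ.
Proof.
  split; [|split]; intros p eps He; exists eps; split; try exact He; intros q Hq;
    rewrite Rabs_minus_sym; destruct (coord_le_dist p q) as [? [? ?]]; lra.
Qed.

Lemma cont3_plus (g h : pt -> R) : cont3 g -> cont3 h -> cont3 (fun p => g p + h p).
Proof.
  intros Cg Ch p eps He.
  apply (near_mono p (fun q => Rabs (g q - g p) < eps / 2 /\ Rabs (h q - h p) < eps / 2)).
  - intros q [Hg Hh].
    replace (g q + h q - (g p + h p)) with ((g q - g p) + (h q - h p)) by ring.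
    eapply Rle_lt_trans; [apply Rabs_triang|lra].
  - apply near_and; [apply Cg|apply Ch]; lra.
Qed.

Lemma cont3_opp (g : pt -> R) : cont3 g -> cont3 (fun p => - g p).
Proof.
  intros Cg p eps He. destruct (Cg p eps He) as [d [Hd H]].
  exists d. split; [exact Hd|]. intros q Hq.
  replace (- g q - - g p) with (- (g q - g p)) by ring.
  rewrite Rabs_Ropp. apply H, Hq.
Qed.

Lemma cont3_minus (g h : pt -> R) : cont3 g -> cont3 h -> cont3 (fun p => g p - h p).
Proof.
  intros Cg Ch. apply cont3_ext with (g := fun p => g p + - h p); [intro; ring|].
  apply cont3_plus; [exact Cg|apply cont3_opp, Ch].
Qed.

(* Near p, |g q h q - g p h p| <= e * (e + |g p| + |h p|) when g and h vary by less than e. *)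
Lemma cont3_mult (g h : pt -> R) : cont3 g -> cont3 h -> cont3 (fun p => g p * h p).
Proof.
  intros Cg Ch p eps He.
  set (C := 1 + Rabs (g p) + Rabs (h p)).
  assert (HC : 0 < C) by (unfold C; pose proof (Rabs_pos (g p)); pose proof (Rabs_pos (h p)); lra).
  set (e := Rmin 1 (eps / C)).
  assert (He0 : 0 < e) by (apply Rmin_pos; [lra|apply Rdiv_lt_0_compat; assumption]).
  assert (He1 : e <= 1) by apply Rmin_l.
  assert (HeC : e * C <= eps).
  { assert (e <= eps / C) by apply Rmin_r.
    apply Rmult_le_compat_r with (r := C) in H; [|lra].
    unfold Rdiv in H. rewrite Rmult_assoc, Rinv_l in H; lra. }
  apply (near_mono p (fun q => Rabs (g q - g p) < e /\ Rabs (h q - h p) < e)).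
  - intros q [Hg Hh].
    replace (g q * h q - g p * h p) with
      ((g q - g p) * (h q - h p) + g p * (h q - h p) + h p * (g q - g p)) by ring.
    eapply Rle_lt_trans; [apply Rabs_triang|].
    eapply Rle_lt_trans; [apply Rplus_le_compat_r, Rabs_triang|].
    rewrite !Rabs_mult.
    pose proof (Rabs_pos (g q - g p)); pose proof (Rabs_pos (h q - h p)).
    pose proof (Rabs_pos (g p)); pose proof (Rabs_pos (h p)).
    unfold C in HeC. nra.
  - apply near_and; [apply Cg|apply Ch]; assumption.
Qed.

Lemma cont3_abs (g : pt -> R) : cont3 g -> cont3 (fun p => Rabs (g p)).
Proof.
  intros Cg p eps He. destruct (Cg p eps He) as [d [Hd H]].
  exists d. split; [exact Hd|]. intros q Hq.
  eapply Rle_lt_trans; [apply Rabs_triang_inv2|apply H, Hq].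
Qed.

Lemma cont3_iter (k : nat) :
  cont3 (fun p => PX (Nat.iter k f p)) /\ cont3 (fun p => PY (Nat.iter k f p)) /\
  cont3 (fun p => PZ (Nat.iter k f p)).
Proof.
  induction k as [|k [CX [CY CZ]]]; [exact cont3_coords|].
  split; [|split].
  - apply cont3_ext with
      (g := fun p => 2 * PX (Nat.iter k f p) * PY (Nat.iter k f p) - PZ (Nat.iter k f p)).
    { intro p. symmetry. apply PX_f. }
    repeat (apply cont3_minus || apply cont3_mult); auto using cont3_const.
  - exact (cont3_ext _ _ (fun p => eq_sym (PY_f _)) CX).
  - exact (cont3_ext _ _ (fun p => eq_sym (PZ_f _)) CY).
Qed.

Lemma cont3_FV : cont3 FV.
Proof.
  destruct cont3_coords as [CX [CY CZ]].
  apply cont3_ext with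
    (g := fun t => PX t * PX t + PY t * PY t + PZ t * PZ t - 2 * PX t * PY t * PZ t - 1).
  { intros [[x y] z]. cbn [FV PX PY PZ fst snd]. ring. }
  repeat (apply cont3_minus || apply cont3_plus || apply cont3_mult);
    auto using cont3_const.
Qed.

Lemma near_pos (g : pt -> R) (p : pt) : cont3 g -> 0 < g p -> near p (fun q => 0 < g q).
Proof.
  intros Cg Hp. apply (near_mono p (fun q => Rabs (g q - g p) < g p)).
  - intros q Hq. apply Rabs_def2 in Hq. lra.
  - apply Cg, Hp.
Qed.

Lemma E_near_iter (k : nat) (p : pt) :
  E (Nat.iter k f p) -> near p (fun q => E (Nat.iter k f q)).
Proof.
  destruct (cont3_iter k) as [CX [CY CZ]]. intros [H1 [H2 H3]].
  apply (near_mono p (fun q =>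
    0 < Rabs (PX (Nat.iter k f q)) - Rabs (PY (Nat.iter k f q)) /\
    0 < Rabs (PY (Nat.iter k f q)) - 1 /\
    0 < Rabs (PX (Nat.iter k f q)) - Rabs (PZ (Nat.iter k f q)))).
  { intros q [G1 [G2 G3]]. unfold E. lra. }
  repeat apply near_and; apply near_pos; try lra;
    repeat (apply cont3_minus || apply cont3_abs); auto using cont3_const.
Qed.

Lemma unbounded_near (p : pt) :
  0 <= FV p -> ~ bounded_fwd_orbit p -> near p (fun q => ~ bounded_fwd_orbit q).
Proof.
  intros HI Hub. destruct (escapes_of_unbounded p HI Hub) as [k Hk].
  apply (near_mono p (fun q => E (Nat.iter k f q))).
  - intros q. apply escape_after.
  - apply E_near_iter, Hk.
Qed.

Theorem lemma4p2 (V0 : R) (V1 : option R) :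
  0 <= V0 -> le_ext V0 V1 ->
  closed3 (fun p => in_union_S V0 V1 p /\ bounded_fwd_orbit p).
Proof.
  intros HV0 _ p Hp.
  destruct (Rlt_le_dec (FV p) V0) as [Hlow|Hge].
  - apply (near_mono p (fun q => 0 < V0 - FV q)).
    + intros q Hq [[V [HV [_ HF]]] _]. lra.
    + apply near_pos; [apply cont3_minus; [apply cont3_const|apply cont3_FV]|lra].
  - destruct (classic (exists v, V1 = Some v /\ v < FV p)) as [[v [-> Hhigh]]|Hnot_high].
    + apply (near_mono p (fun q => 0 < FV q - v)).
      * intros q Hq [[V [_ [HV HF]]] _]. simpl in HV. lra.
      * apply near_pos; [apply cont3_minus; [apply cont3_FV|apply cont3_const]|lra].
    + assert (Hin : in_union_S V0 V1 p).
      { exists (FV p). split; [exact Hge|split; [|reflexivity]].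
        destruct V1 as [v|]; simpl; [|exact I].
        apply Rnot_lt_le. intro Hhigh. apply Hnot_high. exists v. auto. }
      apply (near_mono p (fun q => ~ bounded_fwd_orbit q)); [tauto|].
      apply unbounded_near; [lra|tauto].
Qed.
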